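(* Let $A\in\mathcal{CP}_n$ have a unique CP representation $A=\sum_{i=1}^k\mathbf b_i\mathbf b_i^T$ (with $\mathbf b_i\in\mathbb R^n_+$). Then the minimal face of $\mathcal{CP}_n$ containing $A$ is the polyhedral cone \[\mathcal F^A_{\mathcal{CP}_n}=\operatorname{cone}\{\mathbf b_i\mathbf b_i^T : 1\le i\le k\}.\]
   Context: A symmetric $n\times n$ matrix $A$ is completely positive if $A=BB^T$ for some entrywise nonnegative matrix $B$; $\mathcal{CP}_n$ is the convex cone of $n\times n$ completely positive matrices. A CP representation of $A$ is an expression $A=\sum_{i=1}^k\mathbf b_i\mathbf b_i^T$ with $\mathbf b_i\ge\mathbf 0$ (equivalently a CP factorization $A=BB^T$ with columns $\mathbf b_i$); only representations with pairwise linearly independent $\mathbf b_i$ are considered, and representations differing only in the order of the summands are considered equal. A subcone $\mathcal F$ of a convex cone $\mathcal K$ is a face if $X,Y\in\mathcal K$ and $X+Y\in\mathcal F$ imply $X,Y\in\mathcal F$. The minimal face containing $A$ is the intersection of all faces of $\mathcal{CP}_n$ containing $A$. $\operatorname{cone}S$ denotes the set of all finite nonnegative linear combinations of elements of $S$. *)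

From HB Require Import structures.
From mathcomp Require Import all_boot all_order all_algebra.
From mathcomp Require Import reals.
Set Implicit Arguments. Unset Strict Implicit. Unset Printing Implicit Defensive.
Import Order.TTheory GRing.Theory Num.Theory.
Local Open Scope ring_scope.

Section CP.
Variables (R : realType) (n : nat).

Definition nonneg_mx (m p : nat) (B : 'M[R]_(m, p)) : Prop :=
  forall i j, 0 <= B i j.

Definition completely_positive (A : 'M[R]_n) : Prop :=
  exists (m : nat) (B : 'M[R]_(n, m)), nonneg_mx B /\ A = B *m B^T.

Definition lin_indep2 (u v : 'cV[R]_n) : Prop :=
  forall a c : R, a *: u + c *: v = 0 -> a = 0 /\ c = 0.

Definition cp_rep (A : 'M[R]_n) (bs : seq 'cV[R]_n) : Prop :=
  [/\ forall b, b \in bs -> nonneg_mx b,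
      forall b, b \in bs -> b != 0,
      forall i j, (i < size bs)%N -> (j < size bs)%N -> i <> j ->
        lin_indep2 (nth 0 bs i) (nth 0 bs j)
    & A = \sum_(b <- bs) b *m b^T].

Definition unique_cp_rep (A : 'M[R]_n) (bs : seq 'cV[R]_n) : Prop :=
  cp_rep A bs /\ forall bs', cp_rep A bs' -> perm_eq bs bs'.

Definition is_convex_cone (F : 'M[R]_n -> Prop) : Prop :=
  [/\ F 0,
      forall X Y, F X -> F Y -> F (X + Y)
    & forall (t : R) X, 0 <= t -> F X -> F (t *: X)].

Definition is_face_CP (F : 'M[R]_n -> Prop) : Prop :=
  [/\ is_convex_cone F,
      forall X, F X -> completely_positive X
    & forall X Y, completely_positive X -> completely_positive Y ->
        F (X + Y) -> F X /\ F Y].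

Definition minimal_face_CP (A : 'M[R]_n) (X : 'M[R]_n) : Prop :=
  forall F, is_face_CP F -> F A -> F X.

Definition cone_of (S : 'M[R]_n -> Prop) (X : 'M[R]_n) : Prop :=
  exists (k : nat) (v : 'I_k -> 'M[R]_n) (c : 'I_k -> R),
    [/\ forall i, S (v i), forall i, 0 <= c i & X = \sum_(i < k) c i *: v i].

End CP.

From HB Require Import structures.
From mathcomp Require Import all_boot all_order all_algebra.
From mathcomp Require Import reals.
From mathcomp Require Import ring.
From Stdlib Require Import Classical.
Import Order.TTheory GRing.Theory Num.Theory.
Local Open Scope ring_scope.

(* Let A = \sum_(b <- bs) b b^T be the unique CP representation of A and let
   C = cone {b b^T | b in bs}.  We show that C is a face of CP_n containing A;
   since every face containing A contains each summand b b^T (faces are closed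
   under splitting CP summands), C is then the minimal face.

   The only nontrivial point is the face property of C: if Y + Z lies in C,
   with Y = B B^T and Z CP, write Y + Z = \sum_b d_b b b^T with d_b >= 0 and
   choose t > 0 with t d_b <= 1.  Then
       A = t Y + t Z + \sum_b (1 - t d_b) b b^T
   is again a sum of rank-one matrices of nonnegative vectors, among which
   are the columns of sqrt(t) B.  Merging proportional vectors turns any such
   sum into a CP representation (lemma [normalize]), so by uniqueness every
   column of B is a multiple of some b in bs, whence Y = \sum_j B_j B_j^T
   lies in C. *)

Set Implicit Arguments. Unset Strict Implicit.
Section MinimalFace.
Variables (R : realType) (n : nat).
Implicit Types (A M X Y Z : 'M[R]_n) (bs ws : seq 'cV[R]_n) (b u v w : 'cV[R]_n).

Lemma outerZ (s : R) u : (s *: u) *m (s *: u)^T = s ^+ 2 *: (u *m u^T).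
Proof. by apply/matrixP => i j; rewrite !mxE !big_ord1 !mxE; ring. Qed.

Lemma gram_cols m (B : 'M[R]_(n, m)) :
  B *m B^T = \sum_(j < m) col j B *m (col j B)^T.
Proof.
apply/matrixP => i k; rewrite !mxE summxE; apply: eq_bigr => j _.
by rewrite !mxE big_ord1 !mxE.
Qed.

Lemma gram_scaled_cols m (B : 'M[R]_(n, m)) (s : R) :
  \sum_(j <- index_enum 'I_m) (s *: col j B) *m (s *: col j B)^T
  = s ^+ 2 *: (B *m B^T).
Proof.
by rewrite gram_cols scaler_sumr; apply: eq_bigr => j _; rewrite outerZ.
Qed.

Lemma cp0 : completely_positive (0 : 'M[R]_n).
Proof. by exists 0%N, 0; split; [move=> i [] | rewrite mul0mx]. Qed.

Lemma cpD X Y : completely_positive X -> completely_positive Y ->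
  completely_positive (X + Y).
Proof.
move=> [m1 [B1 [h1 ->]]] [m2 [B2 [h2 ->]]].
exists (m1 + m2)%N, (row_mx B1 B2); split; last by rewrite tr_row_mx mul_row_col.
by move=> i j; rewrite mxE; case: (split j).
Qed.

Lemma cpZ (t : R) X : 0 <= t -> completely_positive X ->
  completely_positive (t *: X).
Proof.
move=> ht [m [B [hB ->]]]; exists m, (Num.sqrt t *: B); split.
  by move=> i j; rewrite mxE mulr_ge0 // sqrtr_ge0.
by rewrite linearZ -scalemxAl -scalemxAr scalerA -expr2 sqr_sqrtr.
Qed.

Lemma cp_outer b : nonneg_mx b -> completely_positive (b *m b^T).
Proof. by move=> hb; exists 1%N, b. Qed.

Lemma cp_sum_outer ws : (forall w, w \in ws -> nonneg_mx w) ->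
  completely_positive (\sum_(w <- ws) w *m w^T).
Proof.
move=> hws; rewrite big_seq; apply: (big_ind (@completely_positive R n)).
- exact: cp0.
- exact: cpD.
- by move=> w /hws /cp_outer.
Qed.

Lemma cone0 S : cone_of S (0 : 'M[R]_n).
Proof.
by exists 0%N, (fun _ => 0), (fun _ => 0); split; [case|case|rewrite big_ord0].
Qed.

Lemma coneD S X Y : cone_of S X -> cone_of S Y -> cone_of S (X + Y).
Proof.
move=> [k1 [v1 [c1 [hv1 hc1 ->]]]] [k2 [v2 [c2 [hv2 hc2 ->]]]].
exists (k1 + k2)%N,
  (fun i => match split i with inl i1 => v1 i1 | inr i2 => v2 i2 end),
  (fun i => match split i with inl i1 => c1 i1 | inr i2 => c2 i2 end); split.
- by move=> i; case: (split i).
- by move=> i; case: (split i).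
- rewrite big_split_ord /=; congr (_ + _); apply: eq_bigr => i _.
    by rewrite (unsplitK (inl _ i)).
  by rewrite (unsplitK (inr _ i)).
Qed.

Lemma coneZ S (t : R) X : 0 <= t -> cone_of S X -> cone_of S (t *: X).
Proof.
move=> ht [k [v [c [hv hc ->]]]]; exists k, v, (fun i => t * c i); split => //.
  by move=> i; rewrite mulr_ge0.
by rewrite scaler_sumr; apply: eq_bigr => i _; rewrite scalerA.
Qed.

Lemma cone_in S M : S M -> cone_of S M.
Proof.
move=> hM; exists 1%N, (fun _ => M), (fun _ => 1).
by split => //; rewrite big_ord1 scale1r.
Qed.

Lemma cone_sum S (I : Type) (r : seq I) (P : pred I) (F : I -> 'M[R]_n) :
  (forall i, P i -> cone_of S (F i)) -> cone_of S (\sum_(i <- r | P i) F i).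
Proof. by apply: (big_ind (cone_of S)); [exact: cone0 | exact: coneD]. Qed.

Lemma cone_is_convex S : is_convex_cone (@cone_of R n S).
Proof. by split; [exact: cone0 | exact: coneD | move=> t X; exact: coneZ]. Qed.

Lemma convex_cone_contains_cone (F S : 'M[R]_n -> Prop) X :
  is_convex_cone F -> (forall M, S M -> F M) -> cone_of S X -> F X.
Proof.
move=> [F0 FD FZ] hS [k [v [c [hv hc ->]]]].
by apply: (big_ind F) => // i _; apply: FZ => //; apply: hS.
Qed.

Lemma face_contains_summands F ws : is_face_CP F ->
  (forall w, w \in ws -> nonneg_mx w) ->
  F (\sum_(w <- ws) w *m w^T) -> forall w, w \in ws -> F (w *m w^T).
Proof.
move=> [_ _ split_face]; elim: ws => [|w ws IH] hn //.
have hws : forall u, u \in ws -> nonneg_mx u.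
  by move=> u hu; apply: hn; rewrite inE hu orbT.
have hw : nonneg_mx w by apply: hn; rewrite inE eqxx.
rewrite big_cons => /(split_face _ _ (cp_outer hw) (cp_sum_outer hws)) [Fw Fws].
by move=> u; rewrite inE => /predU1P [-> // | /(IH hws Fws)].
Qed.

Lemma li_sym u v : lin_indep2 u v -> lin_indep2 v u.
Proof. by move=> h a c e; have := h c a; rewrite addrC => /(_ e) [-> ->]. Qed.

Lemma li_scaled u (m : R) : ~ lin_indep2 u (m *: u).
Proof.
move=> h; have [_] : m = 0 /\ -1 = 0 :> R by apply: h; rewrite scaleN1r subrr.
by move/eqP; rewrite oppr_eq0 oner_eq0.
Qed.

Lemma li_self u : ~ lin_indep2 u u.
Proof. by move=> h; apply: (@li_scaled u 1); rewrite scale1r. Qed.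

Lemma li_scale u v (m : R) : m != 0 -> lin_indep2 u v -> lin_indep2 (m *: u) v.
Proof.
move=> hm h a c e; have [h1 h2] : a * m = 0 /\ c = 0 by apply: h; rewrite -scalerA.
by split => //; move/eqP: h1; rewrite mulf_eq0 (negbTE hm) orbF => /eqP.
Qed.

Lemma dependent_multiple w b : ~ lin_indep2 w b -> b != 0 ->
  exists l : R, w = l *: b.
Proof.
move=> hdep hb; apply: NNPP => hne; apply: hdep => a c e.
have [a0|a0] := eqVneq a 0.
  move: e; rewrite a0 scale0r add0r => /eqP; rewrite scaler_eq0 (negbTE hb) orbF.
  by move/eqP.
exfalso; apply: hne; exists (- c / a).
apply: (scalerI a0); rewrite scalerA mulrCA divff // mulr1 scaleNr.
by apply/eqP; rewrite -subr_eq0 opprK; apply/eqP.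
Qed.

Definition cp_rep_mem M bs :=
  [/\ forall b, b \in bs -> nonneg_mx b, forall b, b \in bs -> b != 0, uniq bs,
      forall u v, u \in bs -> v \in bs -> u != v -> lin_indep2 u v
    & M = \sum_(b <- bs) b *m b^T].

Lemma cp_rep_memE M bs : cp_rep_mem M bs -> cp_rep M bs.
Proof.
move=> [hnn hnz hu hli hM]; split => // i j hi hj hij.
by apply: hli; rewrite ?mem_nth // nth_uniq //; apply/eqP.
Qed.

Lemma cp_rep_uniq M bs : cp_rep M bs -> uniq bs.
Proof.
move=> [_ _ hli _]; apply/(uniqP 0) => i j hi hj e.
by apply: NNPP => hij; have := hli i j hi hj hij; rewrite e; exact: li_self.
Qed.

Definition multiple_in bs w := exists2 b, b \in bs & exists l : R, w = l *: b.

Lemma multiple_inZ bs (s : R) w : s != 0 -> multiple_in bs (s *: w) ->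
  multiple_in bs w.
Proof.
move=> hs [b hb [l hl]]; exists b => //; exists (l / s).
by apply: (scalerI hs); rewrite hl scalerA mulrC divfK.
Qed.

Lemma cp_rep_mem_rescale M bs b (mu : R) : cp_rep_mem M bs -> b \in bs ->
  0 < mu -> cp_rep_mem (M + (mu ^+ 2 - 1) *: (b *m b^T)) (mu *: b :: rem b bs).
Proof.
move=> [hnn hnz hu hli hM] hb mu_gt0.
have mu0 : mu != 0 by rewrite gt_eqF.
have mem_rem_b v : v \in rem b bs -> v \in bs /\ v != b.
  by rewrite (mem_rem_uniq _ hu) inE => /andP [-> ->].
have new_indep v : v \in rem b bs -> lin_indep2 (mu *: b) v.
  by move=> /mem_rem_b [hv hvb]; apply: li_scale => //; apply: hli; rewrite // eq_sym.
split.
- move=> u; rewrite inE => /predU1P [-> | /mem_rem_b [hu' _]]; last exact: hnn.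
  by move=> i j; rewrite mxE; apply: mulr_ge0; [exact: ltW | exact: hnn].
- move=> u; rewrite inE => /predU1P [-> | /mem_rem_b [hu' _]]; last exact: hnz.
  by rewrite scaler_eq0 negb_or mu0 hnz.
- by rewrite /= rem_uniq // andbT; apply/negP => /new_indep /li_self.
- move=> u v; rewrite !inE => /predU1P [-> | hu'] /predU1P [-> | hv'].
  + by rewrite eqxx.
  + by move=> _; apply: new_indep.
  + by move=> _; apply/li_sym/new_indep.
  + by have [? _] := mem_rem_b u hu'; have [? _] := mem_rem_b v hv'; apply: hli.
- rewrite big_cons outerZ hM (big_rem _ hb) /= scalerBl scale1r.
  by set P := b *m b^T; rewrite addrAC (addrC P) subrK.
Qed.

Lemma multiple_in_rescale bs b (mu : R) w : uniq bs -> b \in bs -> mu != 0 ->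
  multiple_in bs w -> multiple_in (mu *: b :: rem b bs) w.
Proof.
move=> hu hb mu0 [b' hb' [l ->]]; have [eb|neb] := eqVneq b' b.
  exists (mu *: b); first by rewrite inE eqxx.
  by exists (l / mu); rewrite eb scalerA divfK.
by exists b'; [rewrite inE (mem_rem_uniq _ hu) inE /= neb hb' orbT | exists l].
Qed.

Lemma cp_rep_mem_cons M bs w : cp_rep_mem M bs -> nonneg_mx w -> w != 0 ->
  (forall b, b \in bs -> lin_indep2 w b) -> cp_rep_mem (w *m w^T + M) (w :: bs).
Proof.
move=> [hnn hnz hu hli hM] hw wnz hind; split.
- by move=> u; rewrite inE => /predU1P [-> | /hnn].
- by move=> u; rewrite inE => /predU1P [-> | /hnz].
- by rewrite /= hu andbT; apply/negP => /hind /li_self.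
- move=> u v; rewrite !inE => /predU1P [-> | hu'] /predU1P [-> | hv'].
  + by rewrite eqxx.
  + by move=> _; apply: hind.
  + by move=> _; apply/li_sym/hind.
  + exact: hli.
- by rewrite big_cons hM.
Qed.

Lemma normalize ws : (forall w, w \in ws -> nonneg_mx w) ->
  exists2 bs, cp_rep_mem (\sum_(w <- ws) w *m w^T) bs &
    forall w, w \in ws -> w != 0 -> multiple_in bs w.
Proof.
elim: ws => [|w ws IH] hn.
  by exists [::] => //; split => //; rewrite big_nil.
have hw : nonneg_mx w by apply: hn; rewrite inE eqxx.
have [bs hrep hmul] : exists2 bs, cp_rep_mem (\sum_(u <- ws) u *m u^T) bs &
    forall u, u \in ws -> u != 0 -> multiple_in bs u.
  by apply: IH => u hu; apply: hn; rewrite inE hu orbT.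
rewrite big_cons.
have [-> | wnz] := eqVneq w 0.
  exists bs; first by rewrite mul0mx add0r.
  by move=> u; rewrite inE => /predU1P [-> | /hmul //]; rewrite eqxx.
have [[b hb hdep] | hind] :=
  classic (exists2 b, b \in bs & ~ lin_indep2 w b); last first.
  exists (w :: bs).
    apply: cp_rep_mem_cons => // b hb.
    by apply: NNPP => hdep; apply: hind; exists b.
  move=> u; rewrite inE => /predU1P [-> _ | /hmul hu /hu [b hb hl]].
    by exists w; [rewrite inE eqxx | exists 1; rewrite scale1r].
  by exists b => //; rewrite inE hb orbT.
(* w = l b for some b in bs: merge w w^T into b b^T by rescaling b. *)
have [hnn hnz hu _ _] := hrep.
have [l hl] := dependent_multiple hdep (hnz b hb).
pose mu := Num.sqrt (1 + l ^+ 2).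
have mu_gt0 : 0 < mu by rewrite sqrtr_gt0 ltr_wpDr ?sqr_ge0.
have mu0 : mu != 0 by rewrite gt_eqF.
exists (mu *: b :: rem b bs).
  have -> : w *m w^T + \sum_(u <- ws) u *m u^T =
      \sum_(u <- ws) u *m u^T + (mu ^+ 2 - 1) *: (b *m b^T).
    have -> : mu ^+ 2 - 1 = l ^+ 2.
      by rewrite sqr_sqrtr ?addr_ge0 ?sqr_ge0 //; ring.
    by rewrite hl outerZ addrC.
  exact: cp_rep_mem_rescale.
move=> u; rewrite inE => /predU1P [-> _ | hu' hunz].
  by apply: multiple_in_rescale => //; exists b => //; exists l.
exact/multiple_in_rescale/hmul.
Qed.

Lemma small_scaling bs (d : 'cV[R]_n -> R) : (forall b, 0 <= d b) ->
  exists2 t : R, 0 < t & forall b, b \in bs -> t * d b <= 1.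
Proof.
move=> hd; pose s := \sum_(b <- bs) d b.
have s_ge0 : 0 <= s by rewrite sumr_ge0.
have s1_gt0 : 0 < 1 + s by rewrite ltr_wpDr.
exists (1 + s)^-1; first by rewrite invr_gt0.
move=> b hb; rewrite mulrC ler_pdivrMr // mul1r.
have : d b <= s by rewrite /s (big_rem _ hb) /= lerDl sumr_ge0.
by move=> dbs; rewrite (le_trans dbs) // lerDr.
Qed.

Variables (A : 'M[R]_n) (bs : seq 'cV[R]_n).
Hypothesis hunique : unique_cp_rep A bs.

Definition gens M := exists2 b, b \in bs & M = b *m b^T.

Let hrep : cp_rep A bs := hunique.1.
Let hnn : forall b, b \in bs -> nonneg_mx b. Proof. by case: hrep. Qed.
Let hA : A = \sum_(b <- bs) b *m b^T. Proof. by case: hrep. Qed.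
Let hu : uniq bs := cp_rep_uniq hrep.

(* Every nonzero vector of any rank-one decomposition of A is a multiple of
   some b in bs: this is where uniqueness of the representation enters. *)
Lemma unique_rep_multiples ws : (forall w, w \in ws -> nonneg_mx w) ->
  A = \sum_(w <- ws) w *m w^T -> forall w, w \in ws -> w != 0 -> multiple_in bs w.
Proof.
move=> hws hAws w hw wnz; have [bs' hrep' hmul] := normalize hws.
rewrite -hAws in hrep'; have hperm := hunique.2 _ (cp_rep_memE hrep').
by have [b hb hl] := hmul w hw wnz; exists b; rewrite ?(perm_mem hperm).
Qed.

Lemma cone_gens_multiple w : multiple_in bs w -> cone_of gens (w *m w^T).
Proof.
move=> [b hb [l ->]]; rewrite outerZ.
by apply: coneZ; [exact: sqr_ge0 | apply: cone_in; exists b].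
Qed.

Lemma cone_gens_coeffs X : cone_of gens X ->
  exists2 d : 'cV[R]_n -> R, (forall b, 0 <= d b) &
    X = \sum_(b <- bs) d b *: (b *m b^T).
Proof.
move=> [k [v [c [hv hc ->]]]].
apply: (big_ind (fun X => exists2 d : 'cV[R]_n -> R, (forall b, 0 <= d b) &
    X = \sum_(b <- bs) d b *: (b *m b^T))).
- by exists (fun=> 0) => //; rewrite big1 // => b _; rewrite scale0r.
- move=> _ _ [d1 h1 ->] [d2 h2 ->]; exists (fun b => d1 b + d2 b).
    by move=> b; rewrite addr_ge0.
  by rewrite -big_split; apply: eq_bigr => b _; rewrite scalerDl.
- move=> i _; have [b hb ->] := hv i.
  exists (fun b' => if b' == b then c i else 0); first by move=> b'; case: ifP.
  rewrite (bigD1_seq b hb hu) /= eqxx big1 ?addr0 // => b' /negbTE ->.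
  by rewrite scale0r.
Qed.

Lemma cone_gens_cp X : cone_of gens X -> completely_positive X.
Proof.
apply: convex_cone_contains_cone.
- by split; [exact: cp0 | exact: cpD | exact: cpZ].
- by move=> _ [b hb ->]; exact: cp_outer (hnn hb).
Qed.

Lemma cone_gens_summand Y Z : completely_positive Y -> completely_positive Z ->
  cone_of gens (Y + Z) -> cone_of gens Y.
Proof.
move=> [m [B [hB ->]]] [m2 [B2 [hB2 ->]]] /cone_gens_coeffs [d hd hYZ].
have [t t_gt0 htd] := small_scaling bs hd.
pose st := Num.sqrt t.
have st0 : st != 0 by rewrite gt_eqF // sqrtr_gt0.
have st2 : st ^+ 2 = t by rewrite sqr_sqrtr // ltW.
pose ws := [seq st *: col j B | j <- index_enum 'I_m] ++
           [seq st *: col j B2 | j <- index_enum 'I_m2] ++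
           [seq Num.sqrt (1 - t * d b) *: b | b <- bs].
have hws : forall w, w \in ws -> nonneg_mx w.
  move=> w; rewrite !mem_cat => /or3P [] /mapP [j hj ->] i l; rewrite !mxE;
    by rewrite mulr_ge0 ?sqrtr_ge0 // hnn.
have residual : \sum_(b <- bs)
      (Num.sqrt (1 - t * d b) *: b) *m (Num.sqrt (1 - t * d b) *: b)^T
    = A - t *: (B *m B^T + B2 *m B2^T).
  rewrite hA hYZ scaler_sumr -sumrB; apply: eq_big_seq => b hb.
  by rewrite outerZ sqr_sqrtr ?subr_ge0 ?htd // scalerBl scale1r scalerA.
have hAws : A = \sum_(w <- ws) w *m w^T.
  rewrite !big_cat !big_map !gram_scaled_cols residual st2 scalerDr.
  by rewrite /= addrA subrKC.
rewrite gram_cols; apply: cone_sum => j _.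
have [-> | colnz] := eqVneq (col j B) 0; first by rewrite mul0mx; exact: cone0.
apply/cone_gens_multiple/(multiple_inZ st0)/(unique_rep_multiples hws hAws).
  by rewrite mem_cat; apply/orP; left; apply: map_f; rewrite mem_index_enum.
by rewrite scaler_eq0 negb_or st0.
Qed.

Lemma cone_gens_face : is_face_CP (cone_of gens).
Proof.
split; [exact: cone_is_convex | exact: cone_gens_cp |].
move=> Y Z hY hZ hYZ; split; first exact: cone_gens_summand hYZ.
by apply: (cone_gens_summand hZ hY); rewrite addrC.
Qed.

Lemma cone_gens_A : cone_of gens A.
Proof. by rewrite hA big_seq; apply: cone_sum => b hb; apply: cone_in; exists b. Qed.

End MinimalFace.
Unset Implicit Arguments.

Theorem corollary5p2 (R : realType) (n : nat) (A : 'M[R]_n) (bs : seq 'cV[R]_n) :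
  completely_positive A ->
  unique_cp_rep A bs ->
  forall X : 'M[R]_n,
    minimal_face_CP A X <->
    cone_of (fun M : 'M[R]_n => exists2 b, b \in bs & M = b *m b^T) X.
Proof.
move=> _ hunique X; have [[hnn _ _ hA] _] := hunique; split.
- (* the cone is itself a face containing A *)
  by apply; [exact: cone_gens_face hunique | exact: cone_gens_A hunique].
- (* every face containing A contains each generator, hence the cone *)
  move=> hX F hF FA; have [hconv _ _] := hF.
  apply: (convex_cone_contains_cone hconv) hX => _ [b hb ->].
  by apply: (face_contains_summands hF hnn) => //; rewrite -hA.
Qed.
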